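(* Let $G$ be a finite group and $S$ an inverse-closed, normal multiset of elements of $G\setminus\{1\}$. Let $\overline{S}$ be the underlying set of $S$ (obtained by removing repeated elements), let $\Gamma=\operatorname{Cay}(G,S)$ be the Cayley multigraph and $\overline{\Gamma}=\operatorname{Cay}(G,\overline{S})$ the Cayley graph. Then $\operatorname{Deg}(\overline{\Gamma})$ divides $\operatorname{Deg}(\Gamma)$.
   Context: $m_S(x)$ is the multiplicity of $x$ in $S$; inverse-closed means $m_S(x)=m_S(x^{-1})$, normal means $m_S(gxg^{-1})=m_S(x)$ for all $g,x\in G$. $\operatorname{Cay}(G,S)$ has vertex set $G$ and adjacency matrix with $(x,y)$-entry $m_S(xy^{-1})$ (for a set, entries in $\{0,1\}$). $\operatorname{Deg}$ denotes the degree over $\mathbb{Q}$ of the smallest subfield of $\mathbb{C}$ containing all adjacency eigenvalues. *)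

From HB Require Import structures.
From mathcomp Require Import all_boot all_order all_algebra all_fingroup all_field.
Set Implicit Arguments. Unset Strict Implicit. Unset Printing Implicit Defensive.
Import GRing.Theory Num.Theory.
Local Open Scope ring_scope.

(* A multiset of group elements is given by its multiplicity function
   m : gT -> nat  (m x = multiplicity m_S(x) of x in S). *)

Definition cay_adj (gT : finGroupType) (m : gT -> nat) : 'M[algC]_#|gT| :=
  \matrix_(i, j) (m (enum_val i * (enum_val j)^-1)%g)%:R.

Definition underlying_set (gT : finGroupType) (m : gT -> nat) : gT -> nat :=
  fun x => nat_of_bool (m x != 0%N).

Definition eigenvalues n (A : 'M[algC]_n) : seq algC :=
  sval (closed_field_poly_normal (char_poly A)).

(* Degree over Q of the smallest subfield of C containing all elements of s:
   the Q-dimension of a number field Qs together with an embedding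
   Qs -> algC whose image is Q(s) (Qs = Q(s1), map QsC s1 = s). *)
Definition field_degree (s : seq algC) : nat :=
  \dim {: projT1 (num_field_exists s)}%VS.

Definition Deg n (A : 'M[algC]_n) : nat := field_degree (eigenvalues A).

From HB Require Import structures.
From mathcomp Require Import all_boot all_order all_algebra all_fingroup all_solvable all_field all_character.
Set Implicit Arguments. Unset Strict Implicit. Unset Printing Implicit Defensive.
Import GRing.Theory Num.Theory.
Local Open Scope ring_scope.

(* The eigenvalues of Cay(G, S) for a normal multiset S are the central
   character values w_chi(S) = (sum_x m_S(x) chi(x)) / chi(1), chi in Irr(G)
   ([cay_eigen] below), and these determine the class function m_S.  An automorphism of C acts on
   the character values of G by x |-> x^k for some k prime to |G|, so it maps
   w_chi(S) to w_chi(S^k'), with k' inverse to k modulo |G|.  If it fixes every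
   eigenvalue of Cay(G, S), then S^k' = S, hence the support of S is also
   invariant and every eigenvalue of Cay(G, supp S) is fixed as well.  Galois
   theory in the cyclotomic field of G then yields Q(spec Cay(G, supp S)) <=
   Q(spec Cay(G, S)), so the first degree divides the second. *)

Lemma irr_mulC (gT : finGroupType) (i : Iirr [set: gT]) (a b : gT) :
  'chi_i (a * b)%g = 'chi_i (b * a)%g.
Proof. by rewrite -(cfunJ _ _ (in_setT a)) /conjg !mulgA mulVg mul1g. Qed.

Lemma sum_irr1_mul (gT : finGroupType) (g : gT) :
  \sum_(i : Iirr [set: gT]) 'chi_i 1%g * 'chi_i g = #|gT|%:R *+ (g == 1%g).
Proof.
rewrite -cardsT -cfRegE cfReg_sum sum_cfunE.
by apply: eq_bigr => i _; rewrite cfunE.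
Qed.

Lemma sum_irr1_convolution (gT : finGroupType) (V : gT -> algC) (y : gT) :
  \sum_(i : Iirr [set: gT]) 'chi_i 1%g * \sum_x V x * 'chi_i (x^-1 * y)%g
    = #|gT|%:R * V y.
Proof.
under eq_bigr do rewrite mulr_sumr.
rewrite exchange_big /= (bigD1 y) //= [X in _ + X]big1 ?addr0 => [|x neq_xy].
  under eq_bigr do rewrite mulrCA.
  by rewrite -mulr_sumr sum_irr1_mul mulVg eqxx mulrC.
under eq_bigr do rewrite mulrCA.
by rewrite -mulr_sumr sum_irr1_mul -eq_mulVg1 (negbTE neq_xy) mulr0.
Qed.

Lemma mem_eigenvalues n (A : 'M[algC]_n) (l : algC) :
  (l \in eigenvalues A) = eigenvalue A l.
Proof.
rewrite eigenvalue_root_char /eigenvalues; case: closed_field_poly_normal => r /= ->.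
by rewrite (monicP (char_poly_monic A)) scale1r root_prod_XsubC.
Qed.

Definition cay_eigen (gT : finGroupType) (m : gT -> nat) (i : Iirr [set: gT]) :=
  (\sum_x (m x)%:R * 'chi_i x) / 'chi_i 1%g.

Section ClassMultiplicity.

Variables (gT : finGroupType) (m : gT -> nat).
Hypothesis mJ : forall x y : gT, m (x ^ y)%g = m x.

Lemma sum_irr_mulr (i : Iirr [set: gT]) (y : gT) :
  \sum_x (m x)%:R * 'chi_i (x * y)%g = cay_eigen m i * 'chi_i y.
Proof.
have chiE (z : gT) : 'chi_i z = \tr ('Chi_i z) by rewrite -irrRepr cfunE inE mulr1n.
(* Schur: the class sum of S acts as a scalar on the irreducible module. *)
pose M := \sum_x (m x)%:R *: 'Chi_i x.
have cM : centgmx 'Chi_i M.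
  apply/centgmxP => g _; rewrite mulmx_suml mulmx_sumr.
  rewrite [RHS](reindex_inj (@conjg_inj _ g)) /=; apply: eq_bigr => x _.
  by rewrite -scalemxAl -scalemxAr -!repr_mxM ?inE // mJ /conjg !mulgA mulgV mul1g.
have /is_scalar_mxP[e De] := mx_abs_irr_cent_scalar (groupC (socle_irr _)) cM.
have Me z : \sum_x (m x)%:R * 'chi_i (x * z)%g = e * 'chi_i z.
  rewrite chiE -mxtraceZ -mul_scalar_mx -De mulmx_suml raddf_sum.
  by apply: eq_bigr => x _; rewrite /= -scalemxAl mxtraceZ -repr_mxM ?inE // chiE.
suff <- : e = cay_eigen m i by apply: Me.
have := Me 1%g; under eq_bigr do rewrite mulg1.
by rewrite /cay_eigen => ->; rewrite mulfK ?irr1_neq0.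
Qed.

Lemma eigenvalue_cay_eigen (i : Iirr [set: gT]) :
  eigenvalue (cay_adj m) (cay_eigen m i).
Proof.
apply/eigenvalueP; exists (\row_j 'chi_i (enum_val j)); last first.
  apply/eqP => /rowP /(_ (enum_rank 1%g)); rewrite !mxE enum_rankK.
  exact/eqP/irr1_neq0.
apply/rowP => j; rewrite !mxE -sum_irr_mulr.
under eq_bigr do rewrite !mxE.
rewrite -(big_enum_val (fun x => 'chi_i x * (m (x * (enum_val j)^-1)%g)%:R)) /=.
rewrite (reindex_inj (mulIg (enum_val j))) /=.
by apply: eq_bigr => x _; rewrite mulgK mulrC.
Qed.

Lemma sum_cay_irr_shift (i : Iirr [set: gT]) (x y : gT) :
  \sum_z (m (x * z^-1)%g)%:R * 'chi_i (z^-1 * y)%g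
    = cay_eigen m i * 'chi_i (x^-1 * y)%g.
Proof.
rewrite (reindex_inj (inj_comp (mulIg x) invg_inj)) /= irr_mulC -sum_irr_mulr.
apply: eq_bigr => t _; rewrite invMg invgK mulgA mulgV mul1g.
by rewrite -mulgA irr_mulC mulgA.
Qed.

Lemma eigenvalue_cay_adj (l : algC) :
  eigenvalue (cay_adj m) l -> exists i, l = cay_eigen m i.
Proof.
case/eigenvalueP => v Dv nz_v.
pose V x := v 0 (enum_rank x).
have DV z : \sum_x V x * (m (x * z^-1)%g)%:R = l * V z.
  have := congr1 (fun w : 'rV_#|gT| => w 0 (enum_rank z)) Dv; rewrite /= !mxE => <-.
  rewrite (big_enum_val (fun x => V x * (m (x * z^-1)%g)%:R)) /=.
  by apply: eq_bigr => k _; rewrite !mxE /V enum_valK enum_rankK.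
(* Convolving V with chi_i gives (up to a factor) its chi_i-isotypic
   component P i, which vanishes unless l = cay_eigen m i; weighted by
   chi_i(1), these components add up to |G| V. *)
pose P (i : Iirr [set: gT]) y := \sum_x V x * 'chi_i (x^-1 * y)%g.
have eigP i y : (l - cay_eigen m i) * P i y = 0.
  apply/eqP; rewrite mulrBl subr_eq0; apply/eqP.
  transitivity (\sum_z (\sum_x V x * (m (x * z^-1)%g)%:R) * 'chi_i (z^-1 * y)%g).
    by rewrite /P mulr_sumr; apply: eq_bigr => z _; rewrite DV mulrA.
  under eq_bigr do rewrite mulr_suml.
  rewrite exchange_big /P mulr_sumr; apply: eq_bigr => x _.
  under eq_bigr do rewrite -mulrA.
  by rewrite -mulr_sumr sum_cay_irr_shift mulrCA.
have [i /eqP li | no_i] := pickP (fun i => l == cay_eigen m i); first by exists i.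
case/eqP: nz_v; apply/rowP => j; rewrite mxE -[j]enum_valK; set y := enum_val j.
have : #|gT|%:R * V y = 0.
  rewrite -sum_irr1_convolution big1 // => i _.
  have /eqP := eigP i y; rewrite mulf_eq0 subr_eq0 no_i /= /P => /eqP ->.
  by rewrite mulr0.
have nzG : #|gT|%:R != 0 :> algC by rewrite -cardsT neq0CG.
by move/eqP; rewrite mulf_eq0 (negbTE nzG) => /eqP.
Qed.

Lemma mem_eigenvalues_cay_adj (l : algC) :
  l \in eigenvalues (cay_adj m) <-> exists i, l = cay_eigen m i.
Proof.
rewrite mem_eigenvalues; split; first exact: eigenvalue_cay_adj.
by case=> i ->; apply: eigenvalue_cay_eigen.
Qed.

End ClassMultiplicity.

Lemma cay_eigen_inj (gT : finGroupType) (m1 m2 : gT -> nat) :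
    (forall x y, m1 (x ^ y)%g = m1 x) -> (forall x y, m2 (x ^ y)%g = m2 x) ->
  (forall i, cay_eigen m1 i = cay_eigen m2 i) -> m1 =1 m2.
Proof.
move=> m1J m2J Em x; apply/eqP; rewrite -(eqr_nat algC) -subr_eq0; apply/eqP.
pose g y : algC := (m1 y)%:R - (m2 y)%:R.
have gJ : is_class_fun <<[set: gT]>>%g [ffun y => g y].
  rewrite genGid; apply: intro_class_fun => [y z _ _|y]; last by rewrite inE.
  by rewrite /g m1J m2J.
pose phi : 'CF([set: gT]) := Cfun 0 gJ.
have irr_g0 (i : Iirr [set: gT]) : \sum_y g y * 'chi_i y = 0.
  have := Em i; rewrite /cay_eigen => /(divIf (irr1_neq0 i)) /eqP.
  rewrite -subr_eq0 -sumrB => /eqP E; rewrite -[RHS]E.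
  by apply: eq_bigr => y _; rewrite mulrBl.
have -> : (m1 x)%:R - (m2 x)%:R = phi x by rewrite cfunE.
rewrite (cfun_sum_cfdot phi) sum_cfunE big1 // => i _.
rewrite cfunE cfdotE (_ : \sum_(y in _) _ = 0) ?mulr0 ?mul0r //.
rewrite -[RHS](irr_g0 (conjC_Iirr i)); apply: eq_big => [y|y _]; first by rewrite inE.
by rewrite conjC_IirrE !cfunE.
Qed.

Lemma aut_unity_root_exp (nu : {rmorphism algC -> algC}) n : (0 < n)%N ->
  exists2 k, coprime k n & forall z, z ^+ n = 1 -> nu z = z ^+ k.
Proof.
move=> n_gt0; have [w prim_w] := C_prim_root_exists n_gt0.
have prim_nuw : n.-primitive_root (nu w) by rewrite fmorph_primitive_root.
have [k Dk] := prim_rootP prim_w (prim_expr_order prim_nuw).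
exists k; first by rewrite -(prim_root_exp_coprime k prim_w) -Dk.
move=> z /(prim_rootP prim_w)[j ->].
by rewrite rmorphXn Dk -!exprM mulnC.
Qed.

Lemma irr_aut_exp (gT : finGroupType) (nu : {rmorphism algC -> algC}) n k
    (i : Iirr [set: gT]) (x : gT) :
    (forall z, z ^+ n = 1 -> nu z = z ^+ k) -> (#[x]%g %| n)%N ->
  nu ('chi_i x) = 'chi_i (x ^+ k)%g.
Proof.
move=> nuX dvd_xn; have xX : (x ^+ k)%g \in <[x]>%g by rewrite mem_cycle.
rewrite -(cfResE _ (subsetT _) (cycle_id x)) -(cfResE _ (subsetT _) xX).
have [r ->] := char_sum_irr (cfRes_char <[x]>%g (irr_char i)).
rewrite !sum_cfunE rmorph_sum; apply: eq_bigr => j _.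
have lin_j : 'chi_j \is a linear_char by rewrite irr_cyclic_lin ?cycle_cyclic.
rewrite lin_charX ?cycle_id //; apply: nuX.
by case/dvdnP: dvd_xn => q ->; rewrite mulnC exprM lin_char_unity_root ?cycle_id ?expr1n.
Qed.

Lemma cay_eigen_aut (gT : finGroupType) (m : gT -> nat)
    (nu : {rmorphism algC -> algC}) k (i : Iirr [set: gT]) :
    coprime #|gT| k -> (forall z, z ^+ #|gT| = 1 -> nu z = z ^+ k) ->
  nu (cay_eigen m i) = cay_eigen (fun x => m (x ^+ expg_invn [set: gT] k)%g) i.
Proof.
move=> co_k nuX; have dvdG (x : gT) : (#[x]%g %| #|gT|)%N by rewrite -cardsT order_dvdG ?inE.
have kK : cancel (fun x : gT => x ^+ k)%g (fun x => x ^+ expg_invn [set: gT] k)%g.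
  by move=> x; rewrite (expgK _ (in_setT x)) ?cardsT.
rewrite /cay_eigen fmorph_div (irr_aut_exp _ nuX) // expg1n rmorph_sum.
congr (_ / _); rewrite [RHS](reindex_inj (can_inj kK)) /=; apply: eq_bigr => x _.
by rewrite rmorphM rmorph_nat (irr_aut_exp _ nuX) // kK.
Qed.

Lemma cay_eigen_aut_fixed (gT : finGroupType) (m : gT -> nat)
    (nu : {rmorphism algC -> algC}) (h : nat -> nat) (i : Iirr [set: gT]) :
    (forall x y, m (x ^ y)%g = m x) ->
    (forall j, nu (cay_eigen m j) = cay_eigen m j) ->
  nu (cay_eigen (h \o m) i) = cay_eigen (h \o m) i.
Proof.
move=> mJ fix_m; have [k co_k nuX] := aut_unity_root_exp nu (cardG_gt0 [set: gT]).
rewrite cardsT coprime_sym in co_k nuX.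
have mX : m =1 (fun x => m (x ^+ expg_invn [set: gT] k)%g).
  apply: cay_eigen_inj => [||j]; [exact: mJ | by move=> x y; rewrite -conjXg mJ |].
  by rewrite -(cay_eigen_aut _ _ co_k nuX) fix_m.
rewrite (cay_eigen_aut _ _ co_k nuX).
by congr (_ / _); apply: eq_bigr => x _; rewrite /= -mX.
Qed.

Section NumFieldImage.

Variables (K L : fieldExtType rat).
Variables (KC : {rmorphism K -> algC}) (LC : {rmorphism L -> algC}).

Let in_image x := exists y, KC x = LC y.

Lemma num_field_adjoin_image (xs : seq K) :
  {in xs, forall x, in_image x} -> {in <<1 & xs>>%VS, forall x, in_image x}.
Proof.
have imD x y : in_image x -> in_image y -> in_image (x + y).
  by move=> [x' Dx] [y' Dy]; exists (x' + y'); rewrite !rmorphD Dx Dy.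
have imM x y : in_image x -> in_image y -> in_image (x * y).
  by move=> [x' Dx] [y' Dy]; exists (x' * y'); rewrite !rmorphM Dx Dy.
suff adjE (E : {subfield K}) : {in E, forall x, in_image x} ->
    {in xs, forall x, in_image x} -> {in <<E & xs>>%VS, forall x, in_image x}.
  apply: adjE => _ /vlineP[c ->].
  by exists c%:A; rewrite !alg_num_field !fmorph_rat.
elim: xs E => [|z xs IH] E imE im_xs x; first by rewrite adjoin_nil subfield_closed; apply: imE.
rewrite adjoin_cons; apply: (IH <<E; z>>%AS) => [y Ey|y xs_y]; last first.
  by apply: im_xs; rewrite inE xs_y orbT.
have im_z : in_image z by apply: im_xs; rewrite mem_head.
have [im0 im1] : in_image 0 /\ in_image 1 by split; apply: imE; rewrite ?mem0v ?mem1v.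
rewrite -(Fadjoin_poly_eq Ey) horner_coef; apply: (big_ind in_image) => // j _.
apply: (imM); first by apply/imE/(polyOverP (Fadjoin_polyOver E z y)).
by elim: (nat_of_ord j) => [|n IHn]; rewrite ?expr0 // exprS; apply: imM.
Qed.

Lemma num_field_dim_dvdn : (forall x, in_image x) -> (\dim {:K} %| \dim {:L})%N.
Proof.
move=> imK; have /all_sig[g Dg] : forall x, {y | KC x = LC y}.
  by move=> x; apply: sig_eqW; apply: imK.
have gD : zmod_morphism g.
  by move=> a b; apply: (fmorph_inj LC); rewrite -!Dg !rmorphB -!Dg.
have gM : monoid_morphism g.
  by split=> [|a b]; apply: (fmorph_inj LC); rewrite -?Dg ?rmorph1 // !rmorphM -!Dg.
pose gD_ := GRing.isZmodMorphism.Build _ _ g gD.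
pose gM_ := GRing.isMonoidMorphism.Build _ _ g gM.
pose gRM : {rmorphism K -> L} := HB.pack g gD_ gM_.
pose gZ_ := GRing.isScalable.Build rat K L *:%R g (fmorph_numZ gRM).
pose gLRM : {lrmorphism K -> L} := HB.pack g gD_ gM_ gZ_.
pose f := AHom (linfun_is_ahom gLRM).
rewrite -(@limg_dim_eq _ _ _ f) ?(eqP (AHom_lker0 f)) ?capv0 //.
exact: (field_dimS (subvf (f @: fullv)%AS)).
Qed.

End NumFieldImage.

Lemma cay_eigen_comp_num_field (gT : finGroupType) (m : gT -> nat)
    (Qs : fieldExtType rat) (QsC : {rmorphism Qs -> algC}) (s1 : seq Qs)
    (h : nat -> nat) (i : Iirr [set: gT]) :
    (forall x y, m (x ^ y)%g = m x) -> map QsC s1 = eigenvalues (cay_adj m) ->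
  exists y, cay_eigen (h \o m) i = QsC y.
Proof.
move=> mJ Ds; have [Qn galQn [QnC gQnC [_ _ Qn_chi]]] := group_num_field_exists [set: gT]%G.
have QnE (f : gT -> nat) j : exists a, QnC a = cay_eigen f j.
  have /fin_all_exists[c Dc] x : exists c, QnC c = 'chi[[set: gT]]_j x.
    by have [c Dc] := Qn_chi _ _ _ (irr_char j) x (order_dvdG (in_setT x)); exists c.
  exists ((\sum_x (f x)%:R * c x) / c 1%g); rewrite fmorph_div rmorph_sum Dc.
  by congr (_ / _); apply: eq_bigr => x _; rewrite rmorphM rmorph_nat Dc.
have /fin_all_exists[a Da] := QnE m; have [b Db] := QnE (h \o m) i.
pose E := <<1 & [seq a j | j <- enum (Iirr [set: gT])]>>%AS.
suff Eb : b \in E.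
  have im_a : {in [seq a j | j <- enum (Iirr [set: gT])],
                forall x, exists y, QnC x = QsC y}.
    move=> _ /mapP[j _ ->]; have : QnC (a j) \in eigenvalues (cay_adj m).
      by apply/mem_eigenvalues_cay_adj => //; exists j.
    by rewrite -Ds => /mapP[y _ ->]; exists y.
  by have [y Dy] := num_field_adjoin_image im_a Eb; exists y; rewrite -Db.
have galE : galois E {:Qn} by apply: (galoisS _ galQn); rewrite sub1v subvf.
rewrite -(galois_fixedField galE); apply/fixedFieldP; first exact: memvf.
move=> sg sgE; have [nu Dnu] := gQnC sg.
apply: (fmorph_inj QnC); rewrite Dnu Db cay_eigen_aut_fixed // => j.
rewrite -Da -Dnu (fixed_gal (subvf E) sgE) //.
by apply: seqv_sub_adjoin; apply: map_f; rewrite mem_enum.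
Qed.

Theorem mainTheorem13 (gT : finGroupType) (m : gT -> nat)
  (m1 : m 1%g = 0%N)
  (minv : forall x : gT, m (x^-1)%g = m x)
  (mnormal : forall g x : gT, m (g * x * g^-1)%g = m x) :
  (Deg (cay_adj (underlying_set m)) %| Deg (cay_adj m))%N.
Proof.
have mJ x y : m (x ^ y)%g = m x by have := mnormal (y^-1)%g x; rewrite invgK /conjg mulgA.
have mbJ x y : underlying_set m (x ^ y)%g = underlying_set m x by rewrite /underlying_set mJ.
rewrite /Deg /field_degree.
case: (num_field_exists (eigenvalues (cay_adj m))) => Qs [QsC [s1 Ds _]] /=.
case: num_field_exists => Qb [QbC [b1 Db genQb]] /=.
apply: (num_field_dim_dvdn (KC := QbC) (LC := QsC)) => x.
have : x \in <<1 & b1>>%VS by rewrite genQb memvf.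
apply: num_field_adjoin_image => {}x b1x.
have : QbC x \in eigenvalues (cay_adj (underlying_set m)) by rewrite -Db map_f.
case/(mem_eigenvalues_cay_adj mbJ) => i ->.
exact: (cay_eigen_comp_num_field (fun n => nat_of_bool (n != 0%N)) i mJ Ds).
Qed.
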